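(* Let $\lambda$ be a partition with at most $n$ parts. Let $s+1$ be the number of distinct values in $\lambda$ after padding with zeros to length $n$ (equivalently, $s$ is the largest part of the reduction $\nu$ of $\lambda$). Then the moment variety $\mathcal{M}_{n,\lambda}=\mathcal{M}_{n,\nu}$ has dimension $(n-1)s$.
   Context: Work over $\mathbb{C}$. For a partition $\lambda$ of $d$ with at most $n$ parts, $N_\lambda$ is the set of index vectors $(i_1,\ldots,i_n)\in\mathbb{Z}_{\ge0}^n$ whose multiset of nonzero entries equals $\lambda$. The variety $\mathcal{M}_{n,\lambda}\subset\mathbb{P}^{|N_\lambda|-1}$ is the Zariski closure of the image of $(\mu_{ki})\mapsto(\mu_{1i_1}\cdots\mu_{ni_n})_{(i_1,\ldots,i_n)\in N_\lambda}$, with $\mu_{k0}=1$. Reduction: if the distinct values of the zero-padded $\lambda$ have multiplicities $k_0\ge\cdots\ge k_s$, the reduction is $\nu=(s^{k_s},(s-1)^{k_{s-1}},\ldots,1^{k_1},0^{k_0})$. The variety $\mathcal{M}_{n,\nu}$ is defined in the same way, and it is identified with $\mathcal{M}_{n,\lambda}$ by relabeling the index values. *)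

From mathcomp Require Import all_boot all_algebra.
From mathcomp Require Import Rstruct.
From mathcomp.real_closed Require Import complex.
From mathcomp Require Import mpoly.
Import GRing.Theory.
Local Open Scope ring_scope.

Set Implicit Arguments.
Unset Strict Implicit.
Unset Printing Implicit Defensive.

Definition CC : closedFieldType := (Rdefinitions.R[i])%type.

Definition is_partition_atmost (n : nat) (lam : seq nat) : Prop :=
  [/\ sorted geq lam, all (fun x => 0 < x)%N lam & (size lam <= n)%N].

Definition in_N (n : nat) (lam : seq nat) (i : n.-tuple nat) : bool :=
  perm_eq [seq x <- (i : seq nat) | (0 < x)%N] lam.

(* The monomial mu_{1 i_1} ... mu_{n i_n}, with the convention mu_{k0} = 1.
   The parameters are mu : 'I_n -> nat -> CC, mu k j = mu_{(k+1) j}. *)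
Definition moment_monomial (n : nat) (i : n.-tuple nat)
    (mu : 'I_n -> nat -> CC) : CC :=
  \prod_(k < n) (if tnth i k == 0%N then 1 else mu k (tnth i k)).

(* The coordinates a_1,...,a_m (elements of N_lambda) are algebraically
   dependent on the affine cone over M_{n,lambda}, i.e. some nonzero
   polynomial in the m coordinates lies in the vanishing ideal of the
   affine cone { c * (mu-monomials) } (whose Zariski closure is the affine
   cone over the Zariski closure M_{n,lambda} of the image). *)
Definition coords_dependent (n : nat) (m : nat)
    (a : 'I_m -> n.-tuple nat) : Prop :=
  exists P : {mpoly CC[m]}, P != 0 /\
    forall (c : CC) (mu : 'I_n -> nat -> CC),
      P.@[fun j => c * moment_monomial (a j) mu] = 0.

Definition indep_coords (n : nat) (lam : seq nat) (m : nat) : Prop :=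
  exists a : 'I_m -> n.-tuple nat,
    [/\ injective a, forall j, in_N lam (a j) & ~ coords_dependent a].

(* Dimension of the projective variety M_{n,lambda}: the transcendence
   degree of (the fraction field of) its homogeneous coordinate ring,
   i.e. the dimension of its affine cone, minus one.  The transcendence
   degree is the maximal number of algebraically independent coordinate
   functions. *)
Definition moment_variety_dim_is (n : nat) (lam : seq nat) (D : nat) : Prop :=
  indep_coords n lam D.+1 /\
  forall m, indep_coords n lam m -> (m <= D.+1)%N.

Definition pad (n : nat) (lam : seq nat) : seq nat :=
  lam ++ nseq (n - size lam) 0%N.

Definition reduction_s (n : nat) (lam : seq nat) : nat :=
  (size (undup (pad n lam))).-1.

(* A coordinate t in N_lam is c * prod_k mu_{k,t_k}, a monomial whose exponent
   vector records which value sits at which position of t, an arrangement of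
   the padded partition p.  Let w be the last entry of p and V the s other
   distinct values.  Each position carries one value and each value occurs a
   fixed number of times in every arrangement, so an integer relation among
   the features 1 and [t_k = v] (k < n-1, v in V) of some coordinates extends
   to all features and yields a binomial relation between them; hence at most
   1 + (n-1)s coordinates are algebraically independent.  Conversely, take p
   and, for each k < n-1 and v in V, the arrangement that swaps p_k with the
   final w if p_k = v, and otherwise puts v at position k, p_k at the last
   position and w at the first position of v in p.  After setting
   mu_{k,w} = mu_{n-1,v} = 1, these 1 + (n-1)s coordinates can be given any
   nonzero values, since the system for the remaining mu's is triangular; and
   a polynomial vanishing on the whole torus is zero. *)

From mathcomp Require Import all_boot all_algebra.
From mathcomp Require Import Rstruct.
From mathcomp.real_closed Require Import complex.
From mathcomp Require Import mpoly.
From mathcomp Require Import perm.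
From mathcomp Require Import zify ring.
Import GRing.Theory Num.Theory.
Local Open Scope ring_scope.
Set Implicit Arguments.
Unset Strict Implicit.
Unset Printing Implicit Defensive.

Lemma base_digits_inj (B N : nat) (m1 m2 : 'I_N -> nat) :
  (forall i, m1 i < B)%N -> (forall i, m2 i < B)%N ->
  (\sum_(i < N) m1 i * B ^ i = \sum_(i < N) m2 i * B ^ i)%N -> m1 =1 m2.
Proof.
elim: N m1 m2 => [|N IH] m1 m2 m1B m2B; first by move=> _ [].
rewrite !big_ord_recl /= !expn0 !muln1.
under eq_bigr do rewrite expnS mulnCA.
under [X in _ = (_ + X)%N]eq_bigr do rewrite expnS mulnCA.
rewrite -!big_distrr /= => E.
have B_gt0 : (0 < B)%N by apply: leq_ltn_trans (m1B ord0).
have eq0 : m1 ord0 = m2 ord0.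
  move: (congr1 (modn^~ B) E); rewrite ![(_ + B * _)%N]addnC.
  by rewrite ![(B * _)%N]mulnC !modnMDl !modn_small.
have eqS : forall i, m1 (lift ord0 i) = m2 (lift ord0 i).
  apply: IH => [i|i|]; [exact: m1B|exact: m2B|].
  move: (congr1 (divn^~ B) E); rewrite ![(_ + B * _)%N]addnC.
  by rewrite ![(B * _)%N]mulnC !divnMDl // !divn_small // !addn0.
by move=> i; case: (unliftP ord0 i) => [j ->|->].
Qed.

Section TorusPoints.
Variable R : numDomainType.

Lemma poly_exists_nonroot (q : {poly R}) : q != 0 -> exists t : R, q.[t] != 0.
Proof.
move=> q_neq0; pose rs := [seq (k%:R : R) | k <- iota 0 (size q)].
have [/hasP[t _ qt]|/hasPn rs_roots] := boolP (has (fun t => q.[t] != 0) rs).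
  by exists t.
have : (size rs < size q)%N.
  apply: max_poly_roots q_neq0 _ _.
    by apply/allP=> t /rs_roots; rewrite negbK.
  by rewrite map_inj_uniq ?iota_uniq // => a b /eqP; rewrite eqr_nat => /eqP.
by rewrite size_map size_iota ltnn.
Qed.

Lemma mpoly_exists_torus_nonroot N (P : {mpoly R[N]}) : P != 0 ->
  exists x : 'I_N -> R, (forall i, x i != 0) /\ P.@[x] != 0.
Proof.
(* Kronecker substitution x_i := t ^+ B ^ i; B exceeds every exponent of P. *)
move=> P_neq0; pose B := msize P.
pose code (m : 'X_{1..N}) := (\sum_(i < N) m i * B ^ i)%N.
have code_inj : {in msupp P &, injective code}.
  have digit_lt m i : m \in msupp P -> (m i < B)%N.
    move=> /msize_mdeg_lt; apply: leq_ltn_trans.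
    by rewrite mdegE (bigD1 i) //= leq_addr.
  move=> m1 m2 m1P m2P E; apply/mnmP.
  by apply: (base_digits_inj _ _ E) => i; apply: digit_lt.
pose q : {poly R} := \sum_(m <- msupp P) P@_m *: 'X^(code m).
have q_eval t : q.[t] = P.@[fun i => t ^+ (B ^ i)].
  rewrite mevalE horner_sum; apply: eq_bigr => m _.
  rewrite hornerZ hornerXn -prodrXr; congr (_ * _); apply: eq_bigr => i _.
  by rewrite -exprM mulnC.
have q_neq0 : q != 0.
  have [m0 m0P] : exists m0, m0 \in msupp P.
    case E: (msupp P) => [|m0 s]; last by exists m0; rewrite in_cons eqxx.
    by move: P_neq0; rewrite (mpolyE P) E big_nil eqxx.
  apply/eqP => /(congr1 (fun r : {poly R} => r`_(code m0))).
  rewrite coef0 coef_sum (bigD1_seq m0) ?msupp_uniq //= coefZ coefXn eqxx mulr1.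
  rewrite big1_seq ?addr0 => [/eqP|m /andP[m_neq mP]].
    by apply/negP; rewrite -mcoeff_msupp m0P.
  rewrite coefZ coefXn; case: eqP => [/code_inj|]; last by rewrite mulr0.
  by move=> /(_ m0P mP) /eqP; rewrite eq_sym (negbTE m_neq).
have [t] : exists t : R, (q * 'X).[t] != 0.
  by apply: poly_exists_nonroot; rewrite mulf_neq0 ?polyX_eq0.
rewrite hornerM hornerX mulf_eq0 negb_or => /andP[qt t_neq0].
exists (fun i => t ^+ (B ^ i)); split; first by move=> i; rewrite expf_neq0.
by rewrite -q_eval.
Qed.

End TorusPoints.

Lemma indep_coords_of_onto_torus n lam (T : finType) (a : T -> n.-tuple nat) :
  (forall t, in_N lam (a t)) ->
  (forall y : T -> CC, (forall t, y t != 0) ->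
     exists c mu, forall t, c * moment_monomial (a t) mu = y t) ->
  indep_coords n lam #|T|.
Proof.
move=> a_N onto.
have a_inj : injective a.
  move=> t1 t2 a12; apply/eqP/negP => /negP t12.
  have [|c [mu a_mu]] := onto (fun t => if t == t1 then 2 else 1).
    move=> t; case: ifP; rewrite ?oner_neq0 //.
    by rewrite (@pnatr_eq0 (complex Rdefinitions.R)).
  move: (a_mu t1) (a_mu t2); rewrite a12 eqxx eq_sym (negbTE t12) => -> /eqP.
  by rewrite -subr_eq0 -[2]/(1 + 1) addrK oner_eq0.
exists (fun j => a (enum_val j)); split => // [j1 j2 /a_inj/enum_val_inj //|].
move=> [P [P_neq0 P_vanish]].
have [y [y_neq0 Py]] := mpoly_exists_torus_nonroot P_neq0.
have [c [mu a_mu]] := onto (fun t => y (enum_rank t)) (fun t => y_neq0 _).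
apply/negP: Py; rewrite negbK -(P_vanish c mu); apply/eqP/meval_eq => j.
by rewrite a_mu enum_valK.
Qed.

Lemma exists_int_relation (T : finType) m (F : 'I_m -> T -> int) :
  (#|T| < m)%N ->
  exists z : 'I_m -> int, (exists j, z j != 0) /\
    forall t, \sum_(j < m) z j * F j t = 0.
Proof.
move=> T_lt_m.
pose A : 'M[rat]_(m, #|T|) := \matrix_(j, l) (F j (enum_val l))%:~R.
have : kermx A != 0.
  rewrite kermx_eq0 -row_leq_rank -ltnNge.
  exact: leq_ltn_trans (rank_leq_col A) T_lt_m.
move=> /rowV0Pn[v /sub_kermxP vA v_neq0]; pose r j := v 0 j.
have r_rel t : \sum_(j < m) r j * (F j t)%:~R = 0.
  have := congr1 (fun M : 'M_(1, #|T|) => M 0 (enum_rank t)) vA.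
  rewrite !mxE => E; rewrite -[RHS]E; apply: eq_bigr => j _.
  by rewrite mxE enum_rankK.
pose d := \prod_(k < m) denq (r k).
pose z j := numq (r j) * \prod_(k < m | k != j) denq (r k).
have zE j : (z j)%:~R = r j * d%:~R :> rat.
  rewrite /d (bigD1 j) //= !intrM mulrA; congr (_ * _).
  rewrite -[X in _ = X * _](divq_num_den (r j)) mulfVK //.
  by rewrite intq_eq0 denq_neq0.
have d_neq0 : d != 0 by apply/prodf_neq0 => k _; rewrite denq_neq0.
exists z; split.
  have [j vj] : exists j, v 0 j != 0.
    apply/existsP; apply: contraNT v_neq0 => /existsPn v0.
    by apply/eqP/rowP => j; rewrite mxE; apply/eqP/negPn.
  by exists j; rewrite -intq_eq0 zE mulf_neq0 ?intq_eq0.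
move=> t; apply/eqP; rewrite -intq_eq0 rmorph_sum /=.
under eq_bigr do rewrite intrM zE mulrAC.
by rewrite -mulr_suml r_rel mul0r.
Qed.

Definition zpos (z : int) : nat := if 0 <= z then absz z else 0%N.
Definition zneg (z : int) : nat := if 0 <= z then 0%N else absz z.

Lemma zpos_sub_zneg z : (zpos z)%:Z - (zneg z)%:Z = z.
Proof.
rewrite /zpos /zneg; case: ifP => z_ge0; first by rewrite subr0 gez0_abs.
by rewrite sub0r ltz0_abs ?opprK // real_ltNge ?num_real // z_ge0.
Qed.

Lemma int_relation_split m (z : 'I_m -> int) (b : 'I_m -> nat) :
  \sum_(j < m) z j * (b j)%:Z = 0 ->
  (\sum_(j < m) zpos (z j) * b j = \sum_(j < m) zneg (z j) * b j)%N.
Proof.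
move=> rel; apply/eqP; rewrite -eqz_nat -!natz !natr_sum -subr_eq0 -sumrB.
apply/eqP; rewrite -[RHS]rel; apply: eq_bigr => j _.
by rewrite !natrM !natz -mulrBl zpos_sub_zneg.
Qed.

Lemma prodrX_eq_of_counts (R : comRingType) m (g al be : 'I_m -> nat)
    (f : nat -> R) :
  (forall v, \sum_(j < m) al j * (g j == v) = \sum_(j < m) be j * (g j == v))%N ->
  \prod_(j < m) f (g j) ^+ al j = \prod_(j < m) f (g j) ^+ be j.
Proof.
move=> counts; pose M := (\max_(j < m) g j).+1.
have g_lt j : (g j < M)%N by rewrite ltnS (leq_bigmax j).
suff prod_counts e : \prod_(j < m) f (g j) ^+ e j =
    \prod_(v < M) f v ^+ (\sum_(j < m) e j * (g j == v))%N.
  by rewrite !prod_counts; apply: eq_bigr => v _; rewrite counts.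
under [RHS]eq_bigr do rewrite -prodrXr.
rewrite exchange_big /=; apply: eq_bigr => j _.
rewrite (bigD1 (Ordinal (g_lt j))) //= eqxx muln1 big1 ?mulr1 // => v.
by rewrite -val_eqE /= eq_sym => /negbTE ->; rewrite muln0 expr0.
Qed.

Definition wcount m (z : 'I_m -> int) (g : 'I_m -> nat) (v : nat) : int :=
  \sum_(j < m) z j * ((g j == v) : nat)%:Z.

Lemma coords_dependent_of_relation n m (a : 'I_m -> n.-tuple nat)
    (z : 'I_m -> int) :
  (exists j, z j != 0) -> \sum_(j < m) z j = 0 ->
  (forall (k : 'I_n) (v : nat), wcount z (fun j => tnth (a j) k) v = 0) ->
  coords_dependent a.
Proof.
move=> [j0 zj0_neq0] z_sum0 z_rel.
pose mpos := [multinom zpos (z j) | j < m].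
pose mneg := [multinom zneg (z j) | j < m].
exists ('X_[mpos] - 'X_[mneg]); split.
  rewrite subr_eq0; apply/eqP => /(congr1 (mcoeff mpos)).
  rewrite !mcoeffX eqxx; case: eqP => [/mnmP/(_ j0)|_ /eqP]; last first.
    by rewrite oner_eq0.
  rewrite !mnmE /zpos /zneg; case: ifP => _ /eqP.
    by rewrite eq_sym absz_eq0 (negbTE zj0_neq0).
  by rewrite absz_eq0 (negbTE zj0_neq0).
move=> c mu; rewrite mevalB !mevalX; apply/eqP; rewrite subr_eq0; apply/eqP.
pose h k v : CC := if v == 0%N then 1 else mu k v.
have monomial_powers e : \prod_(j < m) (c * moment_monomial (a j) mu) ^+ e j =
    c ^+ (\sum_(j < m) e j)%N *
    \prod_(k < n) \prod_(j < m) h k (tnth (a j) k) ^+ e j.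
  rewrite -prodrXr [X in _ = _ * X]exchange_big -big_split /=.
  by apply: eq_bigr => j _; rewrite exprMn /moment_monomial -prodrXl.
under eq_bigr do rewrite mnmE.
under [in RHS]eq_bigr do rewrite mnmE.
rewrite !monomial_powers; congr (c ^+ _ * _).
  have := int_relation_split (z := z) (b := fun=> 1%N).
  under eq_bigr do rewrite mulr1.
  by rewrite !(eq_bigr _ (fun j _ => muln1 _)); apply.
apply: eq_bigr => k _; apply: prodrX_eq_of_counts => v.
exact: int_relation_split (z_rel k v).
Qed.

Lemma sum_eq_count_mem (T : eqType) (r : seq T) x :
  (\sum_(y <- r) (y == x))%N = count_mem x r.
Proof. by rewrite -sum1_count [RHS]big_mkcond. Qed.

Lemma wcount_from_other_values m (z : 'I_m -> int) (g : 'I_m -> nat)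
    (w : nat) (V : seq nat) :
  uniq V -> w \notin V -> (forall j, g j \in w :: V) -> \sum_(j < m) z j = 0 ->
  (forall v, v \in V -> wcount z g v = 0) -> forall v, wcount z g v = 0.
Proof.
move=> V_uniq wV g_in z_sum0 zV v.
have [vV|vNV] := boolP (v \in V); first exact: zV.
have [->|vw] := eqVneq v w; last first.
  apply: big1 => j _; case: eqP => [gj_v|]; last by rewrite mulr0.
  by move: (g_in j); rewrite gj_v in_cons (negbTE vw) (negbTE vNV).
have V_ind j : (\sum_(v <- V) (g j == v))%N = (g j \in V) :> nat.
  rewrite -(count_uniq_mem _ V_uniq) -sum_eq_count_mem.
  by apply: eq_bigr => u _; rewrite eq_sym.
have w_ind j : ((g j == w) : nat)%:Z = 1 - \sum_(v <- V) ((g j == v) : nat)%:Z.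
  rewrite -(big_morph _ PoszD (erefl (Posz 0))) V_ind.
  move: (g_in j); rewrite in_cons.
  by case: eqP => [->|_] /=; [rewrite (negbTE wV) subr0|move->; rewrite subrr].
rewrite /wcount; under eq_bigr do rewrite w_ind mulrBr mulr1 mulr_sumr.
by rewrite sumrB z_sum0 sub0r exchange_big big1_seq ?oppr0 // => u /andP[_ /zV].
Qed.

Lemma wcount_from_other_positions n m (z : 'I_m -> int)
    (a : 'I_m -> n.-tuple nat) (p : seq nat) (k0 : 'I_n) v :
  (forall j, perm_eq (a j) p) -> \sum_(j < m) z j = 0 ->
  (forall k, k != k0 -> wcount z (fun j => tnth (a j) k) v = 0) ->
  wcount z (fun j => tnth (a j) k0) v = 0.
Proof.
move=> a_perm z_sum0 z_rel.
have k0_ind j : ((tnth (a j) k0 == v) : nat)%:Z =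
    (count_mem v p)%:Z - \sum_(k < n | k != k0) ((tnth (a j) k == v) : nat)%:Z.
  rewrite -(seq.permP (a_perm j)) -sum_eq_count_mem big_tuple (bigD1 k0) //=.
  by rewrite PoszD (big_morph _ PoszD (erefl (Posz 0))) addrK.
rewrite /wcount; under eq_bigr do rewrite k0_ind mulrBr mulr_sumr.
rewrite sumrB -mulr_suml z_sum0 mul0r sub0r exchange_big.
by rewrite big1 ?oppr0 // => k /z_rel.
Qed.

Lemma prod_eq_off_seq (F : fieldType) (I : finType) (f g : I -> F) (S : seq I) :
  uniq S -> (forall x, x \notin S -> f x = g x) -> (forall x, g x != 0) ->
  \prod_x f x = \prod_x g x * \prod_(x <- S) (f x / g x).
Proof.
move=> S_uniq fg g_neq0; rewrite (big_uniq _ S_uniq).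
rewrite (bigID (mem S) _ f) (bigID (mem S) _ g) /= mulrAC -big_split /=.
by congr (_ * _); apply: eq_bigr => x; [rewrite mulrC divfK|move/fg].
Qed.

Lemma size_pad n lam : (size lam <= n)%N -> size (pad n lam) = n.
Proof. by move=> lam_size; rewrite size_cat size_nseq subnKC. Qed.

Lemma ltn_pred_of_ord n (k : 'I_n.-1) : (n.-1 < n)%N.
Proof. by case: n k => [|n] []. Qed.

Section PaddedPartition.
Variables (n : nat) (lam : seq nat).
Hypotheses (lam_pos : all (fun x => 0 < x)%N lam) (lam_size : (size lam <= n)%N).
Local Notation p := (pad n lam).
Local Notation s := (reduction_s n lam).

Definition pad_last : nat := nth 0%N p n.-1.
Definition other_values : seq nat := [seq v <- undup p | v != pad_last].

Lemma pad_last_eq0 : 0%N \in p -> pad_last = 0%N.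
Proof.
rewrite mem_cat => /orP[/(allP lam_pos)//|]; rewrite mem_nseq => /andP[pad_gt0 _].
rewrite /pad_last nth_cat nth_nseq; case: ifP => [|_]; last by case: ifP.
by move=> last_lt; exfalso; lia.
Qed.

Lemma other_values_uniq : uniq other_values.
Proof. by rewrite filter_uniq ?undup_uniq. Qed.

Lemma mem_other_values v :
  (v \in other_values) = (v \in p) && (v != pad_last).
Proof. by rewrite mem_filter mem_undup andbC. Qed.

Lemma other_values_neq0 v : v \in other_values -> v != 0%N.
Proof.
rewrite mem_other_values => /andP[v_pad]; apply: contraNneq => v0.
by rewrite pad_last_eq0 -?v0.
Qed.

Lemma size_other_values : size other_values = s.
Proof.
rewrite size_filter /reduction_s; have [n0|n_gt0] := posnP n.
  by move: lam_size; rewrite n0 leqn0 => /nilP ->.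
have last_mem : pad_last \in undup p.
  by rewrite mem_undup mem_nth // size_pad // prednK.
have := count_predC (pred1 pad_last) (undup p).
by rewrite count_uniq_mem ?undup_uniq // last_mem add1n => <-.
Qed.

Lemma in_N_perm_pad (t : n.-tuple nat) : in_N lam t = perm_eq t p.
Proof.
apply/idP/idP => [t_N|t_pad]; last first.
  apply: perm_trans (perm_filter _ t_pad) _.
  by rewrite filter_cat filter_nseq cats0 (all_filterP lam_pos).
rewrite -(perm_filterC (fun x => 0 < x)%N t); apply: perm_cat => //.
have /all_pred1P -> : all (pred1 0%N) [seq x <- t | ~~ (0 < x)%N].
  by apply/allP => x; rewrite mem_filter lt0n negbK => /andP[].
rewrite size_filter.
suff -> : count (predC (fun x => 0 < x)%N) t = (n - size lam)%N by [].
apply/eqP; rewrite -(eqn_add2l (size lam)) subnKC // -(perm_size t_N) size_filter.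
by rewrite count_predC size_tuple.
Qed.

(* [None] stands for the factor c and [Some (k, l)] for the position k < n-1
   and the value [nth 0 other_values l]: both the features of the upper bound
   and the coordinates of the lower bound are indexed by T. *)
Local Notation T := (option ('I_n.-1 * 'I_s)).

Definition pos (k : 'I_n.-1) : 'I_n := widen_ord (leq_pred n) k.
Definition last_pos (k : 'I_n.-1) : 'I_n := Ordinal (ltn_pred_of_ord k).

Lemma pos_lt (k : 'I_n.-1) : (pos k < n.-1)%N.
Proof. by rewrite /= ltn_ord. Qed.

Lemma pos_neq_last (k : 'I_n.-1) : pos k != last_pos k.
Proof. by rewrite -val_eqE /= neq_ltn ltn_ord. Qed.

Lemma nth_last_pos k : nth 0%N p (last_pos k) = pad_last.
Proof. by []. Qed.

Lemma indep_coords_le m :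
  indep_coords n lam m -> (m <= (n.-1 * s).+1)%N.
Proof.
move=> [a [_ a_N a_indep]]; rewrite leqNgt; apply/negP => m_gt; apply: a_indep.
have a_perm j : perm_eq (a j) p by rewrite -in_N_perm_pad.
pose F j (t : T) : int := if t is Some (k, l)
  then ((tnth (a j) (pos k) == nth 0%N other_values l) : nat)%:Z
  else 1.
have [|z [z_neq0 z_rel]] := @exists_int_relation T m F.
  by rewrite card_option card_prod !card_ord.
have z_sum0 : \sum_(j < m) z j = 0.
  by have := z_rel None; under eq_bigr do rewrite mulr1.
apply: (coords_dependent_of_relation z_neq0 z_sum0).
have rel_front (k : 'I_n) :
    (k < n.-1)%N -> forall v, wcount z (fun j => tnth (a j) k) v = 0.
  move=> k_lt.
  apply: (wcount_from_other_values (w := pad_last) other_values_uniq _ _ z_sum0).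
  - by rewrite mem_other_values eqxx andbF.
  - move=> j; rewrite in_cons mem_other_values -(perm_mem (a_perm j)) mem_tnth.
    by case: eqP.
  move=> v v_other; have l_lt : (index v other_values < s)%N.
    by rewrite -size_other_values index_mem.
  have := z_rel (Some (Ordinal k_lt, Ordinal l_lt)).
  by rewrite /= nth_index // (_ : pos _ = k) //; apply: val_inj.
move=> k v; have [k_lt|k_ge] := ltnP k n.-1; first exact: rel_front.
apply: (wcount_from_other_positions a_perm z_sum0) => k' k'_neq.
apply: rel_front; move: k'_neq k_ge (ltn_ord k') (ltn_ord k); rewrite -val_eqE /=.
lia.
Qed.

Definition arrangement (sigma : {perm 'I_n}) : n.-tuple nat :=
  [tuple nth 0%N p (sigma k) | k < n].

Lemma arrangement_in_N sigma : in_N lam (arrangement sigma).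
Proof.
have p_size : size p == n by rewrite size_pad.
rewrite in_N_perm_pad; apply/(@tuple_permP _ _ _ (Tuple p_size)); exists sigma.
by congr tval; apply: eq_mktuple => k; rewrite (tnth_nth 0%N).
Qed.

Lemma other_values_pad v : v \in other_values -> v \in p.
Proof. by rewrite mem_other_values => /andP[]. Qed.

Lemma other_values_last v : v \in other_values -> v != pad_last.
Proof. by rewrite mem_other_values => /andP[]. Qed.

(* With v := nth 0 other_values l: if p_k = v, swap position k with the last
   one (where w sits); otherwise the 3-cycle moving v to position k, p_k to
   the last position and w to the first position of v in p. *)
Definition coord_perm (t : T) : {perm 'I_n} :=
  if t is Some (k, l) then
    let v := nth 0%N other_values l in
    if nth 0%N p (pos k) == v then tperm (pos k) (last_pos k)
    else (tperm (pos k) (insubd (pos k) (index v p))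
          * tperm (pos k) (last_pos k))%g
  else 1%g.

Section TorusSolution.
Variable y : T -> CC.
Hypothesis y_neq0 : forall t, y t != 0.

Definition y_at (x v : nat) : CC :=
  match (insub x : option 'I_n.-1),
        (insub (index v other_values) : option 'I_s) with
  | Some k, Some l => y (Some (k, l))
  | _, _ => 1
  end.

Definition mu_diag (x : nat) : CC :=
  let u := nth 0%N p x in
  if u == pad_last then 1 else y None / y_at x u.

(* The parameters mu_{k,w} and mu_{n-1,v} are set to 1; the coordinates of
   the transpositions then give the diagonal ones mu_{k,p_k} = [mu_diag k],
   and those of the 3-cycles the others in terms of the diagonal ones. *)
Definition mu_sol (k : 'I_n) (v : nat) : CC :=
  if (v == pad_last) || (n.-1 <= k)%N then 1
  else if v == nth 0%N p k then mu_diag k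
  else y_at k v * mu_diag k * mu_diag (index v p) / y None.

Definition mu_factor (k : 'I_n) (v : nat) : CC :=
  if v == 0%N then 1 else mu_sol k v.

Lemma y_at_neq0 x v : y_at x v != 0.
Proof.
rewrite /y_at; case: insub => [k|]; last exact: oner_neq0.
by case: insub => [l|]; rewrite ?y_neq0 ?oner_neq0.
Qed.

Lemma mu_diag_neq0 x : mu_diag x != 0.
Proof.
rewrite /mu_diag; case: ifP => _; first exact: oner_neq0.
by rewrite mulf_neq0 ?invr_neq0 ?y_at_neq0.
Qed.

Lemma mu_factor_neq0 k v : mu_factor k v != 0.
Proof.
rewrite /mu_factor /mu_sol.
do 3?case: ifP => _; rewrite ?oner_neq0 ?mu_diag_neq0 //.
by rewrite !mulf_neq0 ?invr_neq0 ?y_at_neq0 ?mu_diag_neq0.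
Qed.

Lemma mu_factor_last_value k : mu_factor k pad_last = 1.
Proof. by rewrite /mu_factor /mu_sol eqxx; case: ifP. Qed.

Lemma mu_factor_last_pos (k : 'I_n) v : (n.-1 <= k)%N -> mu_factor k v = 1.
Proof. by rewrite /mu_factor /mu_sol => ->; rewrite orbT; case: ifP. Qed.

Lemma mu_factor_diag (k : 'I_n) :
  (k < n.-1)%N -> mu_factor k (nth 0%N p k) = mu_diag k.
Proof.
move=> k_lt; rewrite /mu_factor /mu_sol /mu_diag leqNgt k_lt eqxx orbF.
have [->|pk_last] := eqVneq (nth 0%N p k) pad_last; first by case: ifP.
rewrite ifF //; apply: contraNF pk_last => /eqP pk0.
by rewrite pk0 pad_last_eq0 // -pk0 mem_nth // size_pad.
Qed.

Lemma mu_factor_off_diag (k : 'I_n) v :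
    (k < n.-1)%N -> v \in other_values -> v != nth 0%N p k ->
  mu_factor k v = y_at k v * mu_diag k * mu_diag (index v p) / y None.
Proof.
move=> k_lt v_other v_off; rewrite /mu_factor /mu_sol leqNgt k_lt orbF.
rewrite (negbTE (other_values_neq0 v_other)).
by rewrite (negbTE (other_values_last v_other)) (negbTE v_off).
Qed.

Lemma y_at_coord (k : 'I_n.-1) (l : 'I_s) :
  y_at (pos k) (nth 0%N other_values l) = y (Some (k, l)).
Proof.
have l_lt : (l < size other_values)%N by rewrite size_other_values.
by rewrite /y_at index_uniq ?other_values_uniq // !valK.
Qed.

Definition base_value : CC := \prod_(k < n) mu_factor k (nth 0%N p k).

Lemma coord_monomial_swap k (l : 'I_s) (v := nth 0%N other_values l) :
  nth 0%N p (pos k) = v ->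
  \prod_x mu_factor x (nth 0%N p (coord_perm (Some (k, l)) x)) =
    base_value * (y (Some (k, l)) / y None).
Proof.
have v_other : v \in other_values by rewrite mem_nth ?size_other_values.
move=> pk_v.
rewrite /coord_perm /= pk_v eqxx.
rewrite (prod_eq_off_seq (g := fun x => mu_factor x (nth 0%N p x))
    (S := [:: pos k; last_pos k])) => [||x|x]; last first.
- exact: mu_factor_neq0.
- by rewrite !inE negb_or => /andP[xk xl]; rewrite tpermD // eq_sym.
- by rewrite /= inE pos_neq_last.
rewrite !big_cons big_nil tpermL tpermR nth_last_pos mu_factor_last_value.
rewrite !(@mu_factor_last_pos (last_pos k)) // mu_factor_diag ?pos_lt //.
rewrite /mu_diag pk_v (negbTE (other_values_last v_other)) y_at_coord.
by rewrite -/base_value; field; rewrite !y_neq0.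
Qed.

Lemma coord_monomial_cycle k (l : 'I_s) (v := nth 0%N other_values l) :
  nth 0%N p (pos k) != v ->
  \prod_x mu_factor x (nth 0%N p (coord_perm (Some (k, l)) x)) =
    base_value * (y (Some (k, l)) / y None).
Proof.
have v_other : v \in other_values by rewrite mem_nth ?size_other_values.
move=> pk_v.
have v_pad := other_values_pad v_other.
set K := pos k; set L := last_pos k; set Q := insubd K (index v p).
have Q_val : val Q = index v p.
  by rewrite val_insubd -{2}(size_pad lam_size) index_mem v_pad.
have pQ : nth 0%N p Q = v by rewrite Q_val nth_index.
have KQ : K != Q by apply: contraNneq pk_v => KQ; rewrite -/K KQ pQ.
have QL : Q != L.
  by apply: contraNneq (other_values_last v_other) => QL; rewrite -pQ QL.
have Q_lt : (Q < n.-1)%N.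
  by move: QL (ltn_ord Q); rewrite -val_eqE /=; case: (val Q) => *; lia.
have KL : K != L := pos_neq_last k.
rewrite /coord_perm /= (negbTE pk_v) -/K -/L -/Q.
rewrite (prod_eq_off_seq (g := fun x => mu_factor x (nth 0%N p x))
    (S := [:: K; Q; L])) => [||x|x]; last first.
- exact: mu_factor_neq0.
- by rewrite !inE !negb_or => /and3P[xK xQ xL]; rewrite permM !tpermD // eq_sym.
- by rewrite /= !inE negb_or KQ KL QL.
rewrite !big_cons big_nil !permM tpermL tpermR (tpermD KQ) 1?eq_sym //.
rewrite tpermL (tpermD KL QL) tpermR nth_last_pos (mu_factor_diag Q_lt) pQ mulr1.
rewrite mu_factor_diag ?pos_lt // mu_factor_last_value.
rewrite !(@mu_factor_last_pos L) //.
rewrite mu_factor_off_diag ?pos_lt 1?eq_sym // -Q_val y_at_coord -/base_value.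
by field; rewrite !mu_diag_neq0 y_neq0.
Qed.

Lemma monomial_arrangement sigma : moment_monomial (arrangement sigma) mu_sol =
  \prod_k mu_factor k (nth 0%N p (sigma k)).
Proof. by apply: eq_bigr => k _; rewrite tnth_mktuple. Qed.

Lemma coords_onto_torus : exists c mu,
  forall t, c * moment_monomial (arrangement (coord_perm t)) mu = y t.
Proof.
exists (y None / base_value), mu_sol => t.
have base_neq0 : base_value != 0.
  by apply/prodf_neq0 => k _; apply: mu_factor_neq0.
suff -> : moment_monomial (arrangement (coord_perm t)) mu_sol =
          base_value * (y t / y None) by field; rewrite base_neq0 y_neq0.
rewrite monomial_arrangement; case: t => [[k l]|].
  have [] := eqVneq (nth 0%N p (pos k)) (nth 0%N other_values l).
    exact: coord_monomial_swap.
  exact: coord_monomial_cycle.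
by rewrite divff // mulr1; apply: eq_bigr => k _; rewrite perm1.
Qed.

End TorusSolution.

Lemma indep_coords_ge : indep_coords n lam (n.-1 * s).+1.
Proof.
have <- : #|{: T}| = (n.-1 * s).+1.
  by rewrite card_option card_prod !card_ord.
apply: (indep_coords_of_onto_torus (fun t => arrangement_in_N (coord_perm t))).
exact: coords_onto_torus.
Qed.

End PaddedPartition.

Theorem theorem4p4 (n : nat) (lam : seq nat) :
  is_partition_atmost n lam ->
  moment_variety_dim_is n lam ((n - 1) * reduction_s n lam)%N.
Proof.
move=> [_ lam_pos lam_size]; rewrite subn1; split; first exact: indep_coords_ge.
exact: indep_coords_le.
Qed.
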